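(* Let $\Gamma$ be an automatic cross-section with generators $A$ and language of representatives $L$, let $\sigma:A^*\to S$ be an interpretation of $\Gamma$, and let $w\in A^*$. Then $\sigma(w)$ is right cancellable in $S$ if and only if $L_w\circ L_w^{-1}$ is the diagonal relation $\{(u,u):u\in L\}$ on $L$.
   Context: Let $A$ be a finite alphabet, $\$ \notin A$, and let $\delta$ send a pair of words over $A$ to the word over $(A\cup\{\$\})\times(A\cup\{\$\})$ obtained by padding the shorter word on the right with $\$$ and reading both letter by letter. A synchronous automaton recognises a relation $R$ if it accepts exactly $\delta(R)$. A pre-automatic structure $\Gamma$ consists of a finite alphabet $A$, a finite automaton recognising $L\subseteq A^*$, a synchronous automaton recognising $L_=\subseteq L\times L$, and for each $a\in A$ a synchronous automaton recognising $L_a\subseteq L\times L$. An interpretation with respect to a semigroup $S$ is a morphism $\sigma:A^*\to S$ with $\sigma(L)=S$ such that for $u,v\in L$: $(u,v)\in L_=$ iff $\sigma(u)=\sigma(v)$, and $(u,v)\in L_a$ iff $\sigma(ua)=\sigma(v)$. $\Gamma$ is an automatic cross-section (has uniqueness) if it admits an interpretation $\sigma$ whose restriction to $L$ is a bijection onto $S$. Composition of relations is left to right: $R\circ R'=\{(u,v):\exists x,\ (u,x)\in R,\ (x,v)\in R'\}$, and $R^{-1}=\{(v,u):(u,v)\in R\}$. For $w=a_1\cdots a_n$ with $n\ge1$, $a_i\in A$, set $L_w=L_{a_1}\circ\cdots\circ L_{a_n}$, and $L_\epsilon=L_=$ (so $L_w=\{(u,v)\in L\times L:\sigma(uw)=\sigma(v)\}$).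 An element $s\in S$ is right cancellable if $xs=ys$ implies $x=y$ for all $x,y\in S$. *)

From mathcomp Require Import all_boot.
Set Implicit Arguments. Unset Strict Implicit. Unset Printing Implicit Defensive.

Record dfa (B : finType) : Type := DFA {
  dfa_state : finType;
  dfa_start : dfa_state;
  dfa_final : pred dfa_state;
  dfa_trans : dfa_state -> B -> dfa_state }.
Arguments dfa_state {B} d.
Arguments dfa_start {B} d.
Arguments dfa_final {B} d.
Arguments dfa_trans {B} d.

Definition dfa_accepts (B : finType) (M : dfa B) (x : seq B) : bool :=
  dfa_final M (foldl (dfa_trans M) (dfa_start M) x).

Definition recognises (B : finType) (M : dfa B) (L : seq B -> Prop) : Prop :=
  forall x, dfa_accepts M x <-> L x.

(** * Padding: the map delta. [None] plays the role of the padding symbol $. *)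
Fixpoint pad (A : Type) (u v : seq A) {struct u} : seq (option A * option A) :=
  match u, v with
  | [::], _ => [seq (None, Some b) | b <- v]
  | a :: u', [::] => (Some a, None) :: pad u' [::]
  | a :: u', b :: v' => (Some a, Some b) :: pad u' v'
  end.

Definition sync_recognises (A : finType) (M : dfa (option A * option A)%type)
    (R : seq A -> seq A -> Prop) : Prop :=
  forall x, dfa_accepts M x <-> exists u v, R u v /\ x = pad u v.

Record preautomatic (A : finType) := PreAutomatic {
  pa_L : seq A -> Prop;
  pa_Leq : seq A -> seq A -> Prop;
  pa_La : A -> seq A -> seq A -> Prop;
  pa_L_aut : exists M : dfa A, recognises M pa_L;
  pa_Leq_aut : exists M, sync_recognises M pa_Leq;
  pa_La_aut : forall a, exists M, sync_recognises M (pa_La a);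
  pa_Leq_sub : forall u v, pa_Leq u v -> pa_L u /\ pa_L v;
  pa_La_sub : forall a u v, pa_La a u v -> pa_L u /\ pa_L v }.

(* A morphism A^* -> S
   (on the free monoid) is modelled as the monoid morphism A^* -> S^1 determined
   by the images [f a] of the generators; S^1 = option S with [None] the adjoined
   identity (the image of the empty word). *)
Definition mul1 (S : Type) (mul : S -> S -> S) (x y : option S) : option S :=
  match x, y with
  | None, _ => y
  | _, None => x
  | Some s, Some t => Some (mul s t)
  end.

Definition sigma (A S : Type) (mul : S -> S -> S) (f : A -> S) (w : seq A)
    : option S :=
  foldl (fun acc a => mul1 mul acc (Some (f a))) None w.

Definition interpretation (A : finType) (S : Type) (mul : S -> S -> S)
    (G : preautomatic A) (f : A -> S) : Prop :=
  (forall u, pa_L G u -> exists s, sigma mul f u = Some s) /\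
  (forall s : S, exists u, pa_L G u /\ sigma mul f u = Some s) /\
  (forall u v, pa_L G u -> pa_L G v ->
     (pa_Leq G u v <-> sigma mul f u = sigma mul f v)) /\
  (forall a u v, pa_L G u -> pa_L G v ->
     (pa_La G a u v <-> sigma mul f (u ++ [:: a]) = sigma mul f v)).

Definition cross_section (A : finType) (S : Type) (mul : S -> S -> S)
    (G : preautomatic A) : Prop :=
  exists f, interpretation mul G f /\
    forall u v, pa_L G u -> pa_L G v -> sigma mul f u = sigma mul f v -> u = v.

Definition rcomp (T : Type) (R R' : T -> T -> Prop) : T -> T -> Prop :=
  fun u v => exists x, R u x /\ R' x v.

Definition rinv (T : Type) (R : T -> T -> Prop) : T -> T -> Prop :=
  fun u v => R v u.

Fixpoint Lword (A : finType) (G : preautomatic A) (w : seq A)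
    : seq A -> seq A -> Prop :=
  match w with
  | [::] => pa_Leq G
  | [:: a] => pa_La G a
  | a :: w' => rcomp (pa_La G a) (Lword G w')
  end.

Definition right_cancellable (S : Type) (mul : S -> S -> S) (s : option S) : Prop :=
  forall x y : S, mul1 mul (Some x) s = mul1 mul (Some y) s -> x = y.

(* Since sigma is a morphism, (u, v) lies in L_w o L_w^-1 exactly when u, v are
   in L and sigma(u) sigma(w) = sigma(v) sigma(w).  As sigma is surjective from
   L onto S and, by uniqueness, injective on L, the diagonal condition says that
   x sigma(w) = y sigma(w) forces x = y, i.e. that sigma(w) is right cancellable. *)
From mathcomp Require Import all_boot.

Set Implicit Arguments. Unset Strict Implicit. Unset Printing Implicit Defensive.

Section SigmaMorphism.
Variables (A : finType) (S : Type) (mul : S -> S -> S).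
Hypothesis mulA : associative mul.

Lemma mul1A : associative (mul1 mul).
Proof. by case=> [x|] [y|] [z|] //=; rewrite mulA. Qed.

Lemma mul1_Some_l (s : S) (y : option S) : exists t, mul1 mul (Some s) y = Some t.
Proof. by case: y => [t|]; eexists. Qed.

Lemma foldl_sigma (f : A -> S) (acc : option S) (v : seq A) :
  foldl (fun acc a => mul1 mul acc (Some (f a))) acc v = mul1 mul acc (sigma mul f v).
Proof.
elim: v acc => [|a v IHv] acc /=; first by case: acc.
by rewrite IHv [in RHS]/sigma /= IHv -mul1A.
Qed.

Lemma sigma_cat (f : A -> S) (u v : seq A) :
  sigma mul f (u ++ v) = mul1 mul (sigma mul f u) (sigma mul f v).
Proof. by rewrite {1}/sigma foldl_cat foldl_sigma. Qed.

Section Interpretation.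
Variables (G : preautomatic A) (f : A -> S).
Hypothesis Hf : interpretation mul G f.

Local Notation sig := (sigma mul f).

Lemma sigma_L (u : seq A) : pa_L G u -> exists s, sig u = Some s.
Proof. by case: Hf => HL _; apply: HL. Qed.

Lemma sigma_onto (s : S) : exists2 u, pa_L G u & sig u = Some s.
Proof. by case: Hf => _ [Honto _]; have [u [Lu eu]] := Honto s; exists u. Qed.

Lemma sigma_cat_L (w u : seq A) :
  pa_L G u -> exists2 x, pa_L G x & sig (u ++ w) = sig x.
Proof.
move=> Lu; have [t et] := sigma_L Lu.
have [s es] := mul1_Some_l t (sig w).
have [x Lx ex] := sigma_onto s.
by exists x; rewrite // sigma_cat et es ex.
Qed.

Lemma LwordP (w u v : seq A) :
  Lword G w u v <-> [/\ pa_L G u, pa_L G v & sig (u ++ w) = sig v].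
Proof.
case: Hf => _ [_ [Heq Hgen]].
elim: w u v => [|a w IHw] u v.
  rewrite cats0; split; last by case=> Lu Lv /(Heq _ _ Lu Lv).
  by move=> h; have [Lu Lv] := pa_Leq_sub h; split=> //; apply/(Heq _ _ Lu Lv).
case: w IHw => [|b w] IHw /=.
  split; last by case=> Lu Lv /(Hgen _ _ _ Lu Lv).
  by move=> h; have [Lu Lv] := pa_La_sub h; split=> //; apply/(Hgen _ _ _ Lu Lv).
rewrite -cat1s catA; split.
  case=> x [hx /IHw[Lx Lv ex]]; have [Lu _] := pa_La_sub hx.
  move/(Hgen _ _ _ Lu Lx): hx => eu.
  by split=> //; rewrite sigma_cat eu -sigma_cat.
case=> Lu Lv e; have [x Lx ex] := sigma_cat_L [:: a] Lu.
exists x; split; first exact/Hgen.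
by apply/IHw; split=> //; rewrite -e [RHS]sigma_cat ex -sigma_cat.
Qed.

Lemma Lword_comp_invP (w u v : seq A) :
  rcomp (Lword G w) (rinv (Lword G w)) u v <->
  [/\ pa_L G u, pa_L G v & sig (u ++ w) = sig (v ++ w)].
Proof.
split.
  by case=> x [/LwordP[Lu _ eu] /LwordP[Lv _ ev]]; split=> //; rewrite eu ev.
case=> Lu Lv e; have [x Lx ex] := sigma_cat_L w Lu.
by exists x; split; apply/LwordP; split; rewrite // -e.
Qed.

(* Uniqueness is stated for some interpretation; L_= transfers it to every one. *)
Lemma cross_section_sigma_inj (u v : seq A) :
  cross_section mul G -> pa_L G u -> pa_L G v -> sig u = sig v -> u = v.
Proof.
case=> g [[_ [_ [Hgeq _]]] ginj] Lu Lv e.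
case: Hf => _ [_ [Hfeq _]].
by apply: ginj => //; apply/Hgeq => //; apply/Hfeq.
Qed.

End Interpretation.
End SigmaMorphism.

Theorem proposition3p2 (A : finType) (S : Type) (mul : S -> S -> S)
    (mulA : forall x y z : S, mul x (mul y z) = mul (mul x y) z)
    (G : preautomatic A) (HG : cross_section mul G)
    (f : A -> S) (Hf : interpretation mul G f) (w : seq A) :
  right_cancellable mul (sigma mul f w) <->
  (forall u v, rcomp (Lword G w) (rinv (Lword G w)) u v <-> pa_L G u /\ u = v).
Proof.
have cat := sigma_cat mulA f.
split=> [rcancel u v | diag x y exy].
  apply: iff_trans (Lword_comp_invP mulA Hf w u v) _; split; last by case=> Lu <-.
  case=> Lu Lv e; split=> //; apply: (cross_section_sigma_inj Hf) => //.
  have [s es] := sigma_L Hf Lu; have [t et] := sigma_L Hf Lv.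
  by move: e; rewrite !cat es et => /rcancel->.
have [u Lu eu] := sigma_onto Hf x; have [v Lv ev] := sigma_onto Hf y.
have [_ euv] : pa_L G u /\ u = v.
  by apply/diag/(Lword_comp_invP mulA Hf); split; rewrite // !cat eu ev exy.
by move: eu; rewrite euv ev => -[].
Qed.
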